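(* Let $G$ be a word hyperbolic group and $0\to\mathbb Z\xrightarrow{\iota}E\xrightarrow{\pi}G\to1$ a central extension. Let $X$ be a finite set with a map to $E$ whose image is a symmetric generating set of $E$; write $\overline w\in E$ for the evaluation of $w\in X^*$ and $\pi(\overline w)$ for its image in $G$. Then there exists $C>0$ (an integer) such that for every $g\in G$ the maximum $$\max\{\overline w\,\iota(-C\,\mathrm{len}(w)) : w\in X^*,\ \pi(\overline w)=g\}$$ exists with respect to the natural total order on the fibre $\pi^{-1}(g)$. Moreover, there then exists $\lambda>0$ such that every word $w$ achieving this maximum defines a $(\lambda,0)$-quasigeodesic path in the Cayley graph of $G$ with respect to the generating set $\pi(\overline X)$.
   Context: The total order on a fibre $\pi^{-1}(g)$: for $h_1,h_2\in\pi^{-1}(g)$, $h_1\le h_2$ iff $h_2h_1^{-1}=\iota(n)$ with $n\ge 0$. A word $w=x_1\cdots x_n$ defines the path in the Cayley graph of $G$ through the vertices $\pi(\overline{x_1\cdots x_t})$, $t=0,\dots,n$. *)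

From Stdlib Require Import Reals ZArith List Lia.
Set Implicit Arguments.

Record Group := {
  carrier :> Type;
  gmul : carrier -> carrier -> carrier;
  ginv : carrier -> carrier;
  gone : carrier;
  gmulA : forall a b c, gmul a (gmul b c) = gmul (gmul a b) c;
  gmul1l : forall a, gmul gone a = a;
  gmul1r : forall a, gmul a gone = a;
  gmulVl : forall a, gmul (ginv a) a = gone;
  gmulVr : forall a, gmul a (ginv a) = gone
}.

Arguments gmul {g}. Arguments ginv {g}. Arguments gone {g}.

Definition is_hom {G H : Group} (f : G -> H) : Prop :=
  forall a b, f (gmul a b) = gmul (f a) (f b).

Definition evalw {G : Group} {X : Type} (f : X -> G) (w : list X) : G :=
  fold_right (fun x acc => gmul (f x) acc) gone w.

Definition dist {G : Group} (S : list G) (a b : G) (n : nat) : Prop :=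
  (exists u : list G, Forall (fun s => In s S) u /\ length u = n /\
                       evalw (fun s => s) u = gmul (ginv a) b) /\
  (forall u : list G, Forall (fun s => In s S) u ->
     evalw (fun s => s) u = gmul (ginv a) b -> (n <= length u)%nat).

Definition generates {G : Group} (S : list G) : Prop :=
  forall g : G, exists u : list G, Forall (fun s => In s S) u /\
                               evalw (fun s => s) u = g.

Definition symmetric_list {G : Group} (S : list G) : Prop :=
  forall s, In s S -> In (ginv s) S.

(* Gromov hyperbolicity (four-point condition on Gromov products) of the
   word metric of G w.r.t. some finite symmetric generating set. *)
Definition word_hyperbolic (G : Group) : Prop :=
  exists (S : list G) (delta : R),
    generates S /\ symmetric_list S /\ (0 <= delta)%R /\
    forall (w x y z : G) (dwx dwy dwz dxy dyz dxz : nat),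
      dist S w x dwx -> dist S w y dwy -> dist S w z dwz ->
      dist S x y dxy -> dist S y z dyz -> dist S x z dxz ->
      let gp := fun (a b c : nat) => ((INR a + INR b - INR c) / 2)%R in
      (gp dwx dwz dxz >= Rmin (gp dwx dwy dxy) (gp dwy dwz dyz) - delta)%R.

Definition central_extension {E G : Group} (iota : Z -> E) (pi : E -> G) : Prop :=
  (forall a b : Z, iota (a + b)%Z = gmul (iota a) (iota b)) /\
  (forall a b : Z, iota a = iota b -> a = b) /\
  (forall (n : Z) (e : E), gmul (iota n) e = gmul e (iota n)) /\
  is_hom (G:=E) (H:=G) pi /\
  (forall g : G, exists e : E, pi e = g) /\
  (forall e : E, pi e = gone <-> exists n : Z, e = iota n).

Definition fibre_le {E : Group} (iota : Z -> E) (h1 h2 : E) : Prop :=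
  exists n : Z, (0 <= n)%Z /\ gmul h2 (ginv h1) = iota n.

Definition shifted_value {E : Group} {X : Type} (f : X -> E) (iota : Z -> E)
  (C : Z) (w : list X) : E :=
  gmul (evalw f w) (iota (- C * Z.of_nat (length w))%Z).

Definition is_max_word {E G : Group} {X : Type} (f : X -> E) (iota : Z -> E)
  (pi : E -> G) (C : Z) (g : G) (w : list X) : Prop :=
  pi (evalw f w) = g /\
  forall w' : list X, pi (evalw f w') = g ->
    fibre_le iota (shifted_value f iota C w') (shifted_value f iota C w).

(* Distances in G are
   word lengths over the letters of X (mapped by pi o f). *)
Definition quasigeodesic_word {E G : Group} {X : Type} (f : X -> E)
  (pi : E -> G) (lambda : R) (w : list X) : Prop :=
  let p := fun t : nat => pi (evalw f (firstn t w)) in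
  forall s t : nat, (s <= length w)%nat -> (t <= length w)%nat ->
    let dst := INR (Nat.max s t - Nat.min s t) in
    (forall u : list X, pi (evalw f u) = gmul (ginv (p s)) (p t) ->
        (dst / lambda <= INR (length u))%R) /\
    (exists u : list X, pi (evalw f u) = gmul (ginv (p s)) (p t) /\
        (INR (length u) <= lambda * dst)%R).

(* Words over X evaluating to a central element iota n satisfy n <= D len: through a
   set-theoretic section of pi this reduces to loops of G over a generating set S
   satisfying the four-point condition. Such loops admit Dehn's algorithm (a nontrivial
   loop contains a subword of bounded length with a strictly shorter equivalent), and
   each shortening changes the lifted value by one of finitely many central elements.

   For C >= D the shifted values (evalw f w) * iota (-C len w) in a fibre are then
   bounded above, so a maximum exists. If C > D and w is maximal, replacing a subword B
   of w by any u with the same image in G multiplies evalw f w by some iota m with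
   C (|B| - |u|) <= m <= D (|B| + |u|), so |B| <= (C + D) |u|: the path of w is a
   (C + D, 0)-quasigeodesic. *)

From Pilot Require Import Defs.
From Stdlib Require Import Reals ZArith List Lia Lra Wf_nat Classical ClassicalEpsilon.
Import ListNotations.

Section GroupFacts.
Variable G : Group.
Implicit Types a b c : G.

Lemma gmul_cancel_l a b c : gmul a b = gmul a c -> b = c.
Proof.
  intro H. rewrite <- (gmul1l G b), <- (gmul1l G c), <- (gmulVl G a), <- !gmulA, H.
  reflexivity.
Qed.

Lemma ginv_unique a b : gmul a b = gone -> b = ginv a.
Proof. intro H. apply (gmul_cancel_l a). rewrite H, gmulVr. reflexivity. Qed.

Lemma ginv_mul a b : ginv (gmul a b) = gmul (ginv b) (ginv a).
Proof.
  symmetry. apply ginv_unique.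
  rewrite <- gmulA, (gmulA G b), gmulVr, gmul1l, gmulVr. reflexivity.
Qed.

Lemma ginv_one : ginv (gone : G) = gone.
Proof. symmetry. apply ginv_unique. apply gmul1l. Qed.

Lemma ginv_involutive a : ginv (ginv a) = a.
Proof. symmetry. apply ginv_unique. apply gmulVl. Qed.

Lemma gmul_inv_cancel_l a b : gmul (ginv a) (gmul a b) = b.
Proof. rewrite gmulA, gmulVl, gmul1l. reflexivity. Qed.

End GroupFacts.

Section Homomorphisms.
Variables (G H : Group) (p : G -> H).
Hypothesis p_hom : is_hom p.

Lemma hom_one : p gone = gone.
Proof.
  apply (gmul_cancel_l H (p gone)). rewrite <- p_hom, !gmul1r. reflexivity.
Qed.

Lemma hom_inv a : p (ginv a) = ginv (p a).
Proof. apply ginv_unique. rewrite <- p_hom, gmulVr. exact hom_one. Qed.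

Lemma evalw_hom (X : Type) (f : X -> G) (u : list X) :
  p (evalw f u) = evalw (fun x => p (f x)) u.
Proof.
  induction u as [|x u IH]; simpl.
  - exact hom_one.
  - rewrite p_hom, IH. reflexivity.
Qed.

End Homomorphisms.

Definition segment {A : Type} (s t : nat) (w : list A) : list A :=
  firstn (t - s) (skipn s w).

Lemma firstn_segment {A : Type} (w : list A) (s t : nat) :
  s <= t -> firstn t w = firstn s w ++ segment s t w.
Proof.
  intro Hst. unfold segment.
  destruct (le_lt_dec s (length w)) as [Hs|Hs].
  - rewrite <- (firstn_skipn s w) at 1.
    replace t with (length (firstn s w) + (t - s)) at 1
      by (rewrite firstn_length_le by exact Hs; lia).
    apply firstn_app_2.
  - rewrite !firstn_all2 by lia. rewrite skipn_all2 by lia.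
    rewrite firstn_nil, app_nil_r. reflexivity.
Qed.

Lemma segment_decomposition {A : Type} (w : list A) (s t : nat) :
  s <= t -> w = firstn s w ++ segment s t w ++ skipn t w.
Proof.
  intro Hst. rewrite app_assoc, <- firstn_segment by exact Hst.
  symmetry. apply firstn_skipn.
Qed.

Lemma length_segment {A : Type} (w : list A) (s t : nat) :
  t <= length w -> length (segment s t w) = t - s.
Proof. intro Ht. unfold segment. apply firstn_length_le. rewrite length_skipn. lia. Qed.

Section Words.
Variables (G : Group) (X : Type) (f : X -> G).

Lemma evalw_app (l1 l2 : list X) : evalw f (l1 ++ l2) = gmul (evalw f l1) (evalw f l2).
Proof.
  induction l1 as [|x l IH]; simpl.
  - rewrite gmul1l. reflexivity.
  - rewrite IH, gmulA. reflexivity.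
Qed.

Lemma evalw_rev_map_inv (h : X -> X) (u : list X) :
  (forall x, f (h x) = ginv (f x)) -> evalw f (rev (map h u)) = ginv (evalw f u).
Proof.
  intro Hh. induction u as [|x u IH]; simpl.
  - symmetry. apply ginv_one.
  - rewrite evalw_app, IH. simpl. rewrite gmul1r, Hh, ginv_mul. reflexivity.
Qed.

Lemma evalw_segment (w : list X) (s t : nat) : s <= t ->
  evalw f (segment s t w) = gmul (ginv (evalw f (firstn s w))) (evalw f (firstn t w)).
Proof.
  intro Hst. rewrite (firstn_segment w s t Hst), evalw_app, gmul_inv_cancel_l. reflexivity.
Qed.

End Words.

Lemma Forall_segment {A : Type} (P : A -> Prop) (w : list A) (s t : nat) :
  s <= t -> Forall P w -> Forall P (segment s t w).
Proof.
  intros Hst Hw. rewrite (segment_decomposition w s t Hst) in Hw.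
  apply Forall_app in Hw as [_ Hw]. apply Forall_app in Hw as [Hw _]. exact Hw.
Qed.

Lemma nat_least (P : nat -> Prop) :
  (exists n, P n) -> exists n, P n /\ forall m, P m -> n <= m.
Proof.
  intro Hex.
  destruct (dec_inh_nat_subset_has_unique_least_element P (fun n => classic (P n)) Hex)
    as [n [Hn _]].
  exists n. exact Hn.
Qed.

Lemma Z_greatest (P : Z -> Prop) (B : Z) :
  (exists z, P z) -> (forall z, P z -> (z <= B)%Z) ->
  exists z, P z /\ forall z', P z' -> (z' <= z)%Z.
Proof.
  intros [z Hz] HB.
  assert (HBP : forall i, P i -> P (B - Z.of_nat (Z.to_nat (B - i)))%Z).
  { intros i Hi. specialize (HB i Hi). rewrite Z2Nat.id by lia.
    replace (B - (B - i))%Z with i by lia. exact Hi. }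
  destruct (nat_least (fun k => P (B - Z.of_nat k)%Z)) as [k [HPk Hmin]].
  { exists (Z.to_nat (B - z)). exact (HBP z Hz). }
  exists (B - Z.of_nat k)%Z. split; [exact HPk|]. intros z' Hz'.
  assert (Hk := Hmin _ (HBP z' Hz')).
  specialize (HB z' Hz'). lia.
Qed.

Lemma nat_argmax (h : nat -> nat) (n : nat) :
  exists m, m <= n /\ forall t, t <= n -> h t <= h m.
Proof.
  induction n as [|n [m [Hm Hmax]]].
  - exists 0. split; [lia|]. intros t Ht. replace t with 0 by lia. lia.
  - destruct (le_lt_dec (h (S n)) (h m)) as [Hle|Hlt];
      [exists m | exists (S n)]; split; try lia;
      intros t Ht; destruct (Nat.eq_dec t (S n)) as [->|Hne]; try lia;
      specialize (Hmax t ltac:(lia)); lia.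
Qed.

Definition gromov_product (a b c : nat) : R := ((INR a + INR b - INR c) / 2)%R.

Definition four_point_condition {G : Group} (S : list G) (delta : R) : Prop :=
  forall (w x y z : G) (dwx dwy dwz dxy dyz dxz : nat),
    Defs.dist S w x dwx -> Defs.dist S w y dwy -> Defs.dist S w z dwz ->
    Defs.dist S x y dxy -> Defs.dist S y z dyz -> Defs.dist S x z dxz ->
    (gromov_product dwx dwz dxz >=
       Rmin (gromov_product dwx dwy dxy) (gromov_product dwy dwz dyz) - delta)%R.

Definition dehn_shortening {G : Group} (S : list G) (K : nat) : Prop :=
  forall v : list G, Forall (fun s => In s S) v -> evalw (fun s => s) v = gone -> v <> [] ->
    exists A B C u, v = A ++ B ++ C /\ length B <= K /\
      Forall (fun s => In s S) u /\ length u < length B /\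
      evalw (fun s => s) u = evalw (fun s => s) B.

Section WordMetric.
Variables (G : Group) (S : list G).
Hypothesis S_gen : generates S.
Hypothesis S_sym : symmetric_list S.

Lemma dist_exists (a b : G) : exists n, Defs.dist S a b n.
Proof.
  destruct (S_gen (gmul (ginv a) b)) as [u [Hu He]].
  destruct (nat_least (fun k => exists u, Forall (fun s => In s S) u /\ length u = k /\
                          evalw (fun s => s) u = gmul (ginv a) b)) as [k [Hk Hmin]].
  { exists (length u), u. auto. }
  exists k. split; [exact Hk|]. intros u' Hu' He'. apply Hmin. exists u'. auto.
Qed.

Definition wdist (a b : G) : nat :=
  proj1_sig (constructive_indefinite_description _ (dist_exists a b)).

Lemma wdist_spec (a b : G) : Defs.dist S a b (wdist a b).
Proof. unfold wdist. destruct (constructive_indefinite_description _ _). assumption. Qed.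

Lemma wdist_le (a b : G) (u : list G) :
  Forall (fun s => In s S) u -> evalw (fun s => s) u = gmul (ginv a) b -> wdist a b <= length u.
Proof. apply (proj2 (wdist_spec a b)). Qed.

Lemma wdist_witness (a b : G) : exists u, Forall (fun s => In s S) u /\
  length u = wdist a b /\ evalw (fun s => s) u = gmul (ginv a) b.
Proof. exact (proj1 (wdist_spec a b)). Qed.

Lemma wdist_self (a : G) : wdist a a = 0.
Proof.
  assert (H := wdist_le a a [] (Forall_nil _) (eq_sym (gmulVl G a))). simpl in H. lia.
Qed.

Lemma wdist_sym_le (a b : G) : wdist a b <= wdist b a.
Proof.
  destruct (wdist_witness b a) as [u [Hu [Hlen He]]].
  rewrite <- Hlen, <- (length_map ginv u), <- length_rev. apply wdist_le.
  - apply Forall_rev, Forall_map. exact (Forall_impl _ S_sym Hu).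
  - rewrite (evalw_rev_map_inv G G (fun s => s) ginv u (fun _ => eq_refl)), He,
      ginv_mul, ginv_involutive.
    reflexivity.
Qed.

Lemma wdist_sym (a b : G) : wdist a b = wdist b a.
Proof. apply Nat.le_antisymm; apply wdist_sym_le. Qed.

Lemma wdist_prefixes_le (v : list G) (s t : nat) :
  Forall (fun s => In s S) v -> s <= t -> t <= length v ->
  wdist (evalw (fun s => s) (firstn s v)) (evalw (fun s => s) (firstn t v)) <= t - s.
Proof.
  intros Hv Hst Ht. rewrite <- (length_segment v s t Ht).
  apply wdist_le; [exact (Forall_segment _ _ _ _ Hst Hv)|].
  apply evalw_segment. exact Hst.
Qed.

Lemma wdist_four_point (delta : R) : four_point_condition S delta ->
  forall w x y z : G,
    (gromov_product (wdist w x) (wdist w z) (wdist x z) >=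
     Rmin (gromov_product (wdist w x) (wdist w y) (wdist x y))
          (gromov_product (wdist w y) (wdist w z) (wdist y z)) - delta)%R.
Proof.
  intros H4 w x y z.
  exact (H4 w x y z _ _ _ _ _ _ (wdist_spec w x) (wdist_spec w y) (wdist_spec w z)
            (wdist_spec x y) (wdist_spec y z) (wdist_spec x z)).
Qed.

Section Shortcut.
Variable delta : R.
Hypothesis four_point : four_point_condition S delta.
Variable j : nat.
Hypothesis j_large : (2 * delta < INR j)%R.
Variables (n : nat) (c : nat -> G).
Hypothesis c_loop : c 0 = c n.
Hypothesis c_path : forall s t, s <= t -> t <= n -> wdist (c s) (c t) <= t - s.

(* Let m be a point of the loop farthest from c 0. The points m - j and m + j are
   j-close to c m and no farther than c m from c 0, so the four-point condition
   forbids them to be 2j apart. *)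
Lemma loop_shortcut : 0 < n ->
  exists s t, s <= t <= n /\ t - s <= 2 * j /\ wdist (c s) (c t) < t - s.
Proof.
  intro Hn.
  destruct (le_lt_dec n (2 * j)) as [Hsmall|Hbig].
  { exists 0, n. rewrite c_loop, wdist_self. lia. }
  destruct (nat_argmax (fun t => wdist (c 0) (c t)) n) as [m [Hmn Hmax]]. cbv beta in Hmax.
  destruct (le_lt_dec j (wdist (c 0) (c m))) as [HjD|HDj].
  2:{ exists 0, j. specialize (Hmax j ltac:(lia)). lia. }
  assert (HDm1 := c_path 0 m ltac:(lia) Hmn).
  assert (HDm2 : wdist (c 0) (c m) <= n - m)
    by (rewrite c_loop, wdist_sym; apply c_path; lia).
  destruct (le_lt_dec (2 * j) (wdist (c (m - j)) (c (m + j)))) as [Hfar|Hnear].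
  2:{ exists (m - j), (m + j). lia. }
  exfalso.
  assert (Hxy := c_path (m - j) m ltac:(lia) ltac:(lia)).
  assert (Hyz := c_path m (m + j) ltac:(lia) ltac:(lia)).
  assert (Ha := Hmax (m - j) ltac:(lia)). assert (Hb := Hmax (m + j) ltac:(lia)).
  assert (H4 := wdist_four_point _ four_point (c 0) (c (m - j)) (c m) (c (m + j))).
  replace (m - (m - j)) with j in Hxy by lia. replace (m + j - m) with j in Hyz by lia.
  apply le_INR in Hxy, Hyz, Ha, Hb, Hfar. rewrite mult_INR in Hfar. simpl in Hfar.
  unfold gromov_product, Rmin in H4. destruct (Rle_dec _ _) in H4; lra.
Qed.

End Shortcut.

Lemma four_point_dehn_shortening (delta : R) :
  four_point_condition S delta -> exists K, dehn_shortening S K.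
Proof.
  intro H4. destruct (INR_unbounded (2 * delta)) as [j Hj].
  exists (2 * j). intros v Hv Hev Hne.
  set (c := fun t => evalw (fun s : G => s) (firstn t v)).
  destruct (loop_shortcut delta H4 j Hj (length v) c) as [s [t [Hst [HK Hshort]]]].
  - unfold c. rewrite firstn_all. symmetry. exact Hev.
  - intros s t Hst Ht. apply wdist_prefixes_le; assumption.
  - destruct v; [congruence|simpl; lia].
  - destruct (wdist_witness (c s) (c t)) as [u [Hu [Hlen He]]].
    exists (firstn s v), (segment s t v), (skipn t v), u.
    rewrite length_segment by lia.
    repeat split; try lia; try assumption.
    + apply segment_decomposition. lia.
    + rewrite He, evalw_segment by lia. reflexivity.
Qed.

End WordMetric.

Fixpoint words_upto {T : Type} (L : list T) (k : nat) : list (list T) :=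
  match k with
  | O => [[]]
  | S k => [] :: flat_map (fun s => map (cons s) (words_upto L k)) L
  end.

Lemma words_upto_complete {T : Type} (L : list T) (k : nat) (u : list T) :
  Forall (fun s => In s L) u -> length u <= k -> In u (words_upto L k).
Proof.
  revert u. induction k as [|k IH]; intros u Hu Hl.
  - destruct u; simpl in *; [auto|lia].
  - destruct u as [|x u]; simpl; [auto|]. right.
    inversion Hu; subst. apply in_flat_map. exists x. split; [assumption|].
    apply in_map. apply IH; [assumption|]. simpl in Hl. lia.
Qed.

Lemma list_bounded {A : Type} (L : list A) (P : A -> Z -> Prop) :
  (forall x, In x L -> exists M, forall m, P x m -> (m <= M)%Z) ->
  exists M, forall x, In x L -> forall m, P x m -> (m <= M)%Z.
Proof.
  induction L as [|a L IH]; intro H.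
  - exists 0%Z. intros x [].
  - destruct (H a (or_introl eq_refl)) as [Ma HMa].
    destruct IH as [ML HML]; [intros x Hx; apply H; right; exact Hx|].
    exists (Z.max Ma ML). intros x [<-|Hx] m Hm.
    + specialize (HMa m Hm). lia.
    + specialize (HML x Hx m Hm). lia.
Qed.

Lemma length_concat_map_le {A B : Type} (sigma : A -> list B) (enum : list A) (u : list A) :
  (forall x, In x enum) ->
  length (concat (map sigma u)) <= list_max (map (fun x => length (sigma x)) enum) * length u.
Proof.
  intro Henum. induction u as [|x u IH]; simpl; [lia|].
  rewrite length_app.
  assert (Hx : length (sigma x) <= list_max (map (fun x => length (sigma x)) enum)).
  { assert (Hall := proj1 (list_max_le _ _)
                      (le_n (list_max (map (fun x => length (sigma x)) enum)))).
    rewrite Forall_forall in Hall. apply Hall, (in_map (fun y => length (sigma y))), Henum. }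
  lia.
Qed.

Section CentralExtension.
Variables (G E : Group) (iota : Z -> E) (pi : E -> G).
Hypothesis CE : central_extension iota pi.

Lemma iota_add (a b : Z) : iota (a + b)%Z = gmul (iota a) (iota b).
Proof. exact (proj1 CE a b). Qed.

Lemma iota_inj (a b : Z) : iota a = iota b -> a = b.
Proof. exact (proj1 (proj2 CE) a b). Qed.

Lemma iota_central (n : Z) (e : E) : gmul (iota n) e = gmul e (iota n).
Proof. exact (proj1 (proj2 (proj2 CE)) n e). Qed.

Lemma pi_hom : is_hom pi.
Proof. exact (proj1 (proj2 (proj2 (proj2 CE)))). Qed.

Lemma pi_surj (g : G) : exists e, pi e = g.
Proof. exact (proj1 (proj2 (proj2 (proj2 (proj2 CE)))) g). Qed.

Lemma pi_ker (e : E) : pi e = gone -> exists n, e = iota n.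
Proof. exact (proj1 (proj2 (proj2 (proj2 (proj2 (proj2 CE)))) e)). Qed.

Lemma pi_iota (n : Z) : pi (iota n) = gone.
Proof. apply (proj2 (proj2 (proj2 (proj2 (proj2 CE)))) (iota n)). exists n. reflexivity. Qed.

Lemma iota_zero : iota 0%Z = gone.
Proof. apply (gmul_cancel_l E (iota 0%Z)). rewrite <- iota_add, gmul1r. reflexivity. Qed.

Lemma iota_opp (m : Z) : ginv (iota m) = iota (- m)%Z.
Proof.
  symmetry. apply ginv_unique. rewrite <- iota_add, Z.add_opp_diag_r. exact iota_zero.
Qed.

Lemma gmul_iota_iota (a : E) (m k : Z) :
  gmul (gmul a (iota m)) (iota k) = gmul a (iota (m + k)%Z).
Proof. rewrite iota_add, gmulA. reflexivity. Qed.

Lemma same_fibre (a b : E) : pi a = pi b -> exists m, a = gmul b (iota m).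
Proof.
  intro Hab. destruct (pi_ker (gmul (ginv b) a)) as [m Hm].
  { rewrite pi_hom, (hom_inv _ _ _ pi_hom), Hab, gmulVl. reflexivity. }
  exists m. rewrite <- Hm, gmulA, gmulVr, gmul1l. reflexivity.
Qed.

Lemma fibre_le_iota (a : E) (x y : Z) :
  fibre_le iota (gmul a (iota x)) (gmul a (iota y)) <-> (x <= y)%Z.
Proof.
  assert (Hdiff : gmul (gmul a (iota y)) (ginv (gmul a (iota x))) = iota (y - x)%Z).
  { rewrite ginv_mul, iota_opp, <- !gmulA, (gmulA E (iota y)), <- iota_add,
      iota_central, gmulA, gmulVr, gmul1l. reflexivity. }
  unfold fibre_le. rewrite Hdiff. split.
  - intros [n [Hn Hi]]. apply iota_inj in Hi. lia.
  - intro H. exists (y - x)%Z. split; [lia|reflexivity].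
Qed.

Lemma iota_offset_bounded (a b : E) : exists M, forall m, a = gmul b (iota m) -> (m <= M)%Z.
Proof.
  destruct (classic (exists m0, a = gmul b (iota m0))) as [[m0 Hm0]|Hno].
  - exists m0. intros m Hm. rewrite Hm in Hm0.
    apply gmul_cancel_l, iota_inj in Hm0. lia.
  - exists 0%Z. intros m Hm. exfalso. apply Hno. exists m. exact Hm.
Qed.

Lemma evalw_replace_segment {Y : Type} (h : Y -> E) (A B C u : list Y) (m : Z) :
  evalw h B = gmul (evalw h u) (iota m) ->
  evalw h (A ++ B ++ C) = gmul (evalw h (A ++ u ++ C)) (iota m).
Proof.
  intro H. rewrite !evalw_app, H, <- !gmulA. do 2 f_equal. apply iota_central.
Qed.

Section Lifts.
Variable sec : G -> E.
Hypothesis pi_sec : forall g, pi (sec g) = g.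

Lemma pi_evalw_sec (v : list G) : pi (evalw sec v) = evalw (fun s => s) v.
Proof.
  rewrite (evalw_hom _ _ _ pi_hom).
  induction v as [|g v IH]; simpl; [reflexivity|]. rewrite pi_sec, IH. reflexivity.
Qed.

Lemma loop_lift_bound (S : list G) (K : nat) : dehn_shortening S K ->
  exists D, (0 <= D)%Z /\ forall v, Forall (fun s => In s S) v ->
    evalw (fun s => s) v = gone ->
    forall n, evalw sec v = iota n -> (n <= D * Z.of_nat (length v))%Z.
Proof.
  intro Hdehn.
  destruct (list_bounded (list_prod (words_upto S K) (words_upto S K))
     (fun p m => evalw sec (fst p) = gmul (evalw sec (snd p)) (iota m))) as [M HM].
  { intros p _. apply iota_offset_bounded. }
  exists (Z.max 0 M). split; [lia|].
  intro v. remember (length v) as len eqn:Hlen. revert v Hlen.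
  induction len as [len IH] using (well_founded_induction lt_wf).
  intros v Hlen Hv Hev n Hn.
  destruct (classic (v = [])) as [->|Hne].
  { simpl in Hn. rewrite <- iota_zero in Hn. apply iota_inj in Hn. subst n. lia. }
  destruct (Hdehn v Hv Hev Hne) as [A [B [C [u [Hvd [HBK [Hu [Hlu Heu]]]]]]]].
  rewrite Hvd in Hv. apply Forall_app in Hv as [HA HBC]. apply Forall_app in HBC as [HB HC].
  destruct (same_fibre (evalw sec B) (evalw sec u)) as [m Hm].
  { rewrite !pi_evalw_sec. symmetry. exact Heu. }
  assert (HmM : (m <= M)%Z).
  { apply (HM (B, u)); [|exact Hm].
    apply in_prod; apply words_upto_complete; (assumption || lia). }
  set (v' := A ++ u ++ C).
  assert (Hv' : Forall (fun s => In s S) v')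
    by (apply Forall_app; split; [|apply Forall_app; split]; assumption).
  assert (Hev' : evalw (fun s => s) v' = gone).
  { rewrite <- Hev, Hvd. unfold v'. rewrite !evalw_app, Heu. reflexivity. }
  assert (Hlen' : length v' < len).
  { rewrite Hlen, Hvd. unfold v'. rewrite !length_app. lia. }
  destruct (pi_ker (evalw sec v')) as [n' Hn']; [rewrite pi_evalw_sec; exact Hev'|].
  assert (Hn'le := IH _ Hlen' v' eq_refl Hv' Hev' n' Hn').
  assert (Hsplit : evalw sec v = gmul (evalw sec v') (iota m))
    by (rewrite Hvd; apply evalw_replace_segment; exact Hm).
  rewrite Hn, Hn', <- iota_add in Hsplit. apply iota_inj in Hsplit. subst n.
  nia.
Qed.

Lemma letter_lift_offset (X : Type) (f : X -> E) (sigma : X -> list G) (Mx : Z) :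
  (forall x m, f x = gmul (evalw sec (sigma x)) (iota m) -> (m <= Mx)%Z) ->
  (forall x, pi (evalw sec (sigma x)) = pi (f x)) ->
  forall u, exists r, evalw f u = gmul (evalw sec (concat (map sigma u))) (iota r) /\
    (r <= Mx * Z.of_nat (length u))%Z.
Proof.
  intros HMx Hsigma u. induction u as [|x u [r [Hr HrM]]].
  - exists 0%Z. simpl. split; [|lia]. rewrite iota_zero, gmul1l. reflexivity.
  - destruct (same_fibre (f x) (evalw sec (sigma x))) as [mx Hmx]; [symmetry; apply Hsigma|].
    exists (mx + r)%Z. split.
    + simpl. rewrite evalw_app, Hr, Hmx, iota_add, <- !gmulA. f_equal.
      rewrite !gmulA, (iota_central mx). reflexivity.
    + specialize (HMx x mx Hmx). simpl length. lia.
Qed.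

Lemma word_central_bound (X : Type) (enumX : list X) (f : X -> E) (S : list G) (D : Z) :
  (forall x : X, In x enumX) -> generates S -> (0 <= D)%Z ->
  (forall v, Forall (fun s => In s S) v -> evalw (fun s => s) v = gone ->
     forall n, evalw sec v = iota n -> (n <= D * Z.of_nat (length v))%Z) ->
  exists D', (0 <= D')%Z /\
    forall u n, evalw f u = iota n -> (n <= D' * Z.of_nat (length u))%Z.
Proof.
  intros Henum HS HD0 HD.
  destruct (choice _ (fun x => HS (pi (f x)))) as [sigma Hsigma].
  destruct (list_bounded enumX (fun x m => f x = gmul (evalw sec (sigma x)) (iota m)))
    as [Mx HMx].
  { intros x _. apply iota_offset_bounded. }
  set (Lx := list_max (map (fun x => length (sigma x)) enumX)).
  exists (D * Z.of_nat Lx + Z.max 0 Mx)%Z. split; [lia|]. intros u n Hn.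
  set (V := concat (map sigma u)).
  assert (HV : Forall (fun s => In s S) V).
  { apply Forall_concat, Forall_map, Forall_forall. intros x _. apply Hsigma. }
  assert (HVlen := length_concat_map_le sigma enumX u Henum). fold Lx V in HVlen.
  destruct (letter_lift_offset X f sigma Mx (fun x => HMx x (Henum x))) with (u := u)
    as [r [Hr HrM]].
  { intro x. rewrite pi_evalw_sec. apply Hsigma. }
  fold V in Hr.
  assert (HVn : evalw sec V = iota (n - r)%Z).
  { rewrite <- (gmul1r E (evalw sec V)), <- (gmulVr E (iota r)), gmulA, <- Hr, Hn,
      iota_opp, <- iota_add. reflexivity. }
  assert (HVloop : evalw (fun s => s) V = gone) by (rewrite <- pi_evalw_sec, HVn; apply pi_iota).
  specialize (HD V HV HVloop _ HVn).
  apply Nat2Z.inj_le in HVlen. rewrite Nat2Z.inj_mul in HVlen.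
  nia.
Qed.

End Lifts.
End CentralExtension.

Section MaximalWords.
Variables (G E : Group) (iota : Z -> E) (pi : E -> G).
Hypothesis CE : central_extension iota pi.
Variables (X : Type) (f : X -> E) (invX : X -> X).
Hypothesis f_invX : forall x, f (invX x) = ginv (f x).
Variable D : Z.
Hypothesis D_nonneg : (0 <= D)%Z.
Hypothesis central_bound :
  forall u n, evalw f u = iota n -> (n <= D * Z.of_nat (length u))%Z.

Lemma fibre_offset_bound (w w' : list X) (m : Z) :
  evalw f w = gmul (evalw f w') (iota m) ->
  (m <= D * (Z.of_nat (length w) + Z.of_nat (length w')))%Z.
Proof.
  intro Hm. assert (H := central_bound (rev (map invX w') ++ w) m).
  rewrite length_app, length_rev, length_map, evalw_app,
    (evalw_rev_map_inv _ _ _ _ _ f_invX), Hm, gmul_inv_cancel_l in H.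
  specialize (H eq_refl). lia.
Qed.

Lemma max_word_exists (C : Z) : (D <= C)%Z ->
  (forall g, exists w, pi (evalw f w) = g) ->
  forall g, exists w, is_max_word f iota pi C g w.
Proof.
  intros HDC Hwords g. destruct (Hwords g) as [w0 Hw0].
  assert (Hoffset : forall w, pi (evalw f w) = g -> exists z,
    shifted_value f iota C w = gmul (evalw f w0) (iota z) /\
    (z <= D * Z.of_nat (length w0))%Z).
  { intros w Hw. destruct (same_fibre _ _ _ _ CE (evalw f w) (evalw f w0)) as [m Hm].
    { rewrite Hw, Hw0. reflexivity. }
    exists (m + - C * Z.of_nat (length w))%Z. split.
    - unfold shifted_value. rewrite Hm, (gmul_iota_iota _ _ _ _ CE). reflexivity.
    - assert (H := fibre_offset_bound _ _ _ Hm). nia. }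
  destruct (Z_greatest (fun z => exists w, pi (evalw f w) = g /\
                         shifted_value f iota C w = gmul (evalw f w0) (iota z))
                       (D * Z.of_nat (length w0))) as [z [[w [Hw Hwz]] Hzmax]].
  - destruct (Hoffset w0 Hw0) as [z [Hz _]]. exists z, w0. auto.
  - intros z [w [Hw Hwz]]. destruct (Hoffset w Hw) as [z' [Hz' Hle]].
    rewrite Hwz in Hz'. apply gmul_cancel_l, (iota_inj _ _ _ _ CE) in Hz'. lia.
  - exists w. split; [exact Hw|]. intros w' Hw'.
    destruct (Hoffset w' Hw') as [z' [Hz' _]].
    rewrite Hwz, Hz', (fibre_le_iota _ _ _ _ CE). apply Hzmax. exists w'. auto.
Qed.

Lemma max_word_replace_bound (C : Z) (g : G) (A B B' u : list X) :
  is_max_word f iota pi C g (A ++ B ++ B') -> pi (evalw f u) = pi (evalw f B) ->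
  ((C - D) * Z.of_nat (length B) <= (C + D) * Z.of_nat (length u))%Z.
Proof.
  intros [Hw Hmax] Hu.
  destruct (same_fibre _ _ _ _ CE (evalw f B) (evalw f u)) as [m Hm]; [symmetry; exact Hu|].
  assert (Hmle := fibre_offset_bound _ _ _ Hm).
  assert (Hw' : pi (evalw f (A ++ u ++ B')) = g).
  { rewrite <- Hw, !evalw_app, !(pi_hom _ _ _ _ CE), Hu. reflexivity. }
  specialize (Hmax _ Hw'). unfold shifted_value in Hmax.
  rewrite (evalw_replace_segment _ _ _ _ CE _ _ _ _ _ _ Hm), (gmul_iota_iota _ _ _ _ CE),
    (fibre_le_iota _ _ _ _ CE), !length_app, !Nat2Z.inj_add in Hmax.
  nia.
Qed.

Lemma quasigeodesic_of_segment_bound (L : Z) (w : list X) : (1 <= L)%Z ->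
  (forall s t u, s <= t <= length w -> pi (evalw f u) = pi (evalw f (segment s t w)) ->
     (Z.of_nat (t - s) <= L * Z.of_nat (length u))%Z) ->
  quasigeodesic_word f pi (IZR L) w.
Proof.
  intros HL Hseg.
  assert (Hpi := pi_hom _ _ _ _ CE).
  assert (Hprefix : forall s t, s <= t ->
    gmul (ginv (pi (evalw f (firstn s w)))) (pi (evalw f (firstn t w))) =
    pi (evalw f (segment s t w))).
  { intros s t Hst. rewrite evalw_segment, Hpi, (hom_inv _ _ _ Hpi) by exact Hst. reflexivity. }
  assert (Hinv_word : forall u, pi (evalw f (rev (map invX u))) = ginv (pi (evalw f u))).
  { intro u. rewrite (evalw_rev_map_inv _ _ _ _ _ f_invX), (hom_inv _ _ _ Hpi). reflexivity. }
  assert (Hlen_inv : forall u : list X, length (rev (map invX u)) = length u).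
  { intro u. rewrite length_rev, length_map. reflexivity. }
  assert (Hlower : forall s t u, s <= t <= length w ->
    pi (evalw f u) = pi (evalw f (segment s t w)) ->
    (INR (t - s) / IZR L <= INR (length u))%R).
  { intros s t u Hst Hu. specialize (Hseg s t u Hst Hu).
    assert (HLpos : (0 < IZR L)%R) by (apply IZR_lt; lia).
    unfold Rdiv. apply (Rmult_le_reg_r (IZR L)); [exact HLpos|].
    rewrite Rmult_assoc, Rinv_l, Rmult_1_r by lra.
    rewrite !INR_IZR_INZ, <- mult_IZR. apply IZR_le. lia. }
  assert (Hupper : forall s t, s <= t <= length w ->
    (INR (length (segment s t w)) <= IZR L * INR (t - s))%R).
  { intros s t Hst. rewrite length_segment by lia.
    rewrite !INR_IZR_INZ, <- mult_IZR. apply IZR_le. nia. }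
  unfold quasigeodesic_word. cbv zeta. intros s t Hs Ht.
  destruct (le_lt_dec s t) as [Hst|Hts].
  - replace (Nat.max s t - Nat.min s t) with (t - s) by lia. split.
    + intros u Hu. apply (Hlower s t u); [lia|]. rewrite Hu. apply Hprefix. exact Hst.
    + exists (segment s t w). rewrite Hprefix by exact Hst. split; [reflexivity|].
      apply Hupper. lia.
  - replace (Nat.max s t - Nat.min s t) with (s - t) by lia. split.
    + intros u Hu. rewrite <- Hlen_inv. apply (Hlower t s); [lia|].
      rewrite Hinv_word, Hu, ginv_mul, ginv_involutive. apply Hprefix. lia.
    + exists (rev (map invX (segment t s w))).
      rewrite Hinv_word, <- Hprefix, ginv_mul, ginv_involutive, Hlen_inv by lia.
      split; [reflexivity|]. apply Hupper. lia.
Qed.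

Lemma max_word_quasigeodesic (C : Z) (g : G) (w : list X) : (D < C)%Z ->
  is_max_word f iota pi C g w -> quasigeodesic_word f pi (IZR (C + D)) w.
Proof.
  intros HDC Hmax. apply quasigeodesic_of_segment_bound; [lia|].
  intros s t u Hst Hu.
  rewrite (segment_decomposition w s t) in Hmax by lia.
  assert (H := max_word_replace_bound C g _ _ _ u Hmax Hu).
  rewrite length_segment in H by lia. nia.
Qed.

End MaximalWords.

Theorem lemma2p1 (G E : Group) (iota : Z -> E) (pi : E -> G)
  (X : Type) (enumX : list X) (f : X -> E) :
  word_hyperbolic G ->
  central_extension iota pi ->
  (forall x : X, In x enumX) ->
  (forall x : X, exists y : X, f y = ginv (f x)) ->
  (forall e : E, exists w : list X, evalw f w = e) ->
  exists C : Z, (0 < C)%Z /\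
    (forall g : G, exists w : list X, is_max_word f iota pi C g w) /\
    exists lambda : R, (0 < lambda)%R /\
      forall (g : G) (w : list X), is_max_word f iota pi C g w ->
        quasigeodesic_word f pi lambda w.
Proof.
  intros [S [delta [HS [Hsym [_ H4]]]]] CE Henum Hinv Hgen.
  destruct (four_point_dehn_shortening G S HS Hsym delta H4) as [K HK].
  destruct (choice _ (pi_surj _ _ _ _ CE)) as [sec Hsec].
  destruct (loop_lift_bound _ _ _ _ CE sec Hsec S K HK) as [D0 [HD0 Hloop]].
  destruct (word_central_bound _ _ _ _ CE sec Hsec X enumX f S D0 Henum HS HD0 Hloop)
    as [D [HD Hbound]].
  destruct (choice _ Hinv) as [invX HinvX].
  assert (Hwords : forall g, exists w, pi (evalw f w) = g).
  { intro g. destruct (pi_surj _ _ _ _ CE g) as [e He]. destruct (Hgen e) as [w Hw].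
    exists w. rewrite Hw. exact He. }
  exists (D + 1)%Z. split; [lia|]. split.
  - apply (max_word_exists _ _ _ _ CE X f invX HinvX D Hbound); [lia|exact Hwords].
  - exists (IZR (D + 1 + D)). split; [apply IZR_lt; lia|].
    intros g w Hmax.
    exact (max_word_quasigeodesic _ _ _ _ CE X f invX HinvX D HD Hbound (D + 1)%Z g w
             ltac:(lia) Hmax).
Qed.
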